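(* Let $(X,d)$ be a compact metric space, $k\geq1$, and $T:\mathbb{Z}^k\times X\to X$ a continuous action, and let $c>0$ be such that any two distinct $x,y\in X$ satisfy $\sup_{u\in\mathbb{Z}^k}d(T^ux,T^uy)>2c$. Then there exists $\delta>0$ such that whenever $N\geq1$ and $x,y\in X$ satisfy $c\leq d^T_{[-N,N]^k}(x,y)\leq 2c$, we have $d^T_{\partial[-N,N]^k}(x,y)>\delta$.
   Context: For $\Omega\subset\mathbb{R}^k$, $d^T_\Omega(x,y)=\sup_{u\in\Omega\cap\mathbb{Z}^k}d(T^ux,T^uy)$. $\partial[-N,N]^k=\bigcup_{i=1}^k\{x\in[-N,N]^k: x_i\in\{-N,N\}\}$. *)

From HB Require Import structures.
From mathcomp Require Import all_boot all_order all_algebra.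
From mathcomp Require Import all_classical all_reals all_analysis.
Set Implicit Arguments. Unset Strict Implicit. Unset Printing Implicit Defensive.
Import Order.TTheory GRing.Theory Num.Theory.
Local Open Scope classical_set_scope.
Local Open Scope ring_scope.

Definition is_Zk_action (k : nat) (X : Type) (T : 'rV[int]_k -> X -> X) : Prop :=
  (forall x, T 0 x = x) /\ (forall u v x, T (u + v) x = T u (T v x)).

Definition dT (R : realType) (X : metricType R) (k : nat)
  (T : 'rV[int]_k -> X -> X) (Omega : set 'rV[int]_k) (x y : X) : R :=
  sup [set mdist (T u x) (T u y) | u in Omega].

Definition box (k N : nat) : set 'rV[int]_k :=
  [set u | forall i : 'I_k, `|u ord0 i| <= (N%:Z)].

Definition boxbd (k N : nat) : set 'rV[int]_k :=
  [set u | box N u /\ exists i : 'I_k, `|u ord0 i| = (N%:Z)].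

From HB Require Import structures.
From mathcomp Require Import all_boot all_order all_algebra.
From mathcomp Require Import all_classical all_reals all_analysis.
From mathcomp Require Import zify lra.
Import Order.TTheory GRing.Theory Num.Theory.
Local Open Scope classical_set_scope.
Local Open Scope ring_scope.

(* By compactness and expansivity there is an M such that two points whose
   orbits stay 2c-close on [-M,M]^k are c/2-close.  Pick u in [-N,N]^k where
   d(T^u x, T^u y) > c/2.  If u + [-M,M]^k stays inside [-N,N]^k this contradicts
   the choice of M, since d^T on [-N,N]^k is at most 2c.  Otherwise a boundary
   point w = u + t e_i with |t| <= M exists, and the finitely many maps T^(t e_i),
   |t| <= M, are uniformly equicontinuous: if d(T^w x, T^w y) were below some
   delta, then d(T^u x, T^u y) < c/2. *)

Lemma compact_seq_cluster {Y : topologicalType} (s : nat -> Y) :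
  compact [set: Y] ->
  exists p : Y, forall B, nbhs p B -> forall n0, exists2 n, (n0 <= n)%N & B (s n).
Proof.
move=> cY; have [p [_ cl]] := cY (s @ \oo) _ filterT.
exists p => B pB n0.
have tail : (s @ \oo) [set s n | n in [set n | (n0 <= n)%N]].
  by exists n0 => // n /= n0n; exists n.
by have [_ [[n n0n <-] Bsn]] := cl _ B tail pB; exists n.
Qed.

Lemma nbhs_mdist_lt {R : realType} {X : metricType R} (p : X) (e : R) :
  0 < e -> nbhs p [set z | mdist p z < e].
Proof. by move=> e0; rewrite -ballEmdist; apply: nbhsx_ballx. Qed.

Lemma nbhs_pair_mdist_lt {R : realType} {X : metricType R} (p q : X) (e : R) :
  0 < e -> nbhs (p, q) [set z : X * X | mdist p z.1 < e /\ mdist q z.2 < e].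
Proof.
move=> e0; exists ([set z | mdist p z < e], [set z | mdist q z < e]) => /=.
  by split; apply: nbhs_mdist_lt.
by move=> [a b] [].
Qed.

Section CompactMetric.
Context {R : realType} {X Y : metricType R}.

Lemma continuous_mdist_lt {g : X -> Y} {p : X} (e : R) :
  {for p, continuous g} -> 0 < e ->
  exists2 d, 0 < d & forall z, mdist p z < d -> mdist (g p) (g z) < e.
Proof.
move=> gc e0; have := gc _ (nbhs_mdist_lt (g p) e e0).
by rewrite -metricType_numDomainType.nbhs_nbhs_mdist => -[d /= d0 gd]; exists d.
Qed.

Hypothesis cX : compact [set: X].

Lemma compact_unif_continuous {g : X -> Y} : continuous g ->
  forall e, 0 < e ->
  exists2 d, 0 < d & forall a b, mdist a b < d -> mdist (g a) (g b) < e.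
Proof.
move=> gc e e0; apply: contrapT => noUC.
have /choice [s sP] : forall n : nat, exists ab : X * X,
    mdist ab.1 ab.2 < n.+1%:R^-1 /\ e <= mdist (g ab.1) (g ab.2).
  move=> n; apply: contrapT => nab; apply: noUC; exists n.+1%:R^-1 => // a b ab.
  by rewrite ltNge; apply/negP => ge; apply: nab; exists (a, b).
have [p cl] := compact_seq_cluster (fun n => (s n).1) cX.
have [d d0 gd] := continuous_mdist_lt _ (gc p) (divr_gt0 e0 (ltr0Sn _ 1)).
have d20 : 0 < d / 2 by lra.
have [n n0n /= psn] := cl _ (nbhs_mdist_lt p _ d20) (Num.truncn (d / 2)^-1).
have [sn ge] := sP n.
have small : n.+1%:R^-1 < d / 2.
  rewrite invf_plt ?posrE ?invr_gt0 //; apply: lt_le_trans (truncnS_gt _) _.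
  by rewrite ler_nat ltnS.
have psn2 : mdist p (s n).2 < d.
  rewrite (le_lt_trans (metric_triangle _ (s n).1 _)) // [d]splitr.
  by rewrite ltrD // (lt_trans sn small).
have g1 : mdist (g (s n).1) (g p) < e / 2.
  by rewrite metric_sym gd // (lt_trans psn) // ltr_pdivrMr // ltr_pMr // ltr1n.
have := le_lt_trans (metric_triangle _ (g p) _) (ltrD g1 (gd _ psn2)).
by rewrite -splitr ltNge ge.
Qed.

Lemma compact_fin_equicontinuous {F : finType} {f : F -> X -> Y} :
  (forall i, continuous (f i)) -> forall e, 0 < e ->
  exists2 d, 0 < d & forall i a b, mdist a b < d -> mdist (f i a) (f i b) < e.
Proof.
move=> fc e e0.
have /choice [d dP] : forall i, exists d,
    0 < d /\ forall a b, mdist a b < d -> mdist (f i a) (f i b) < e.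
  by move=> i; have [d d0 fd] := compact_unif_continuous (fc i) e e0; exists d.
exists (\big[Num.min/1]_i d i).
  by apply/bigmin_gtP; split => // i _; case: (dP i).
by move=> i a b ab; apply: (dP i).2; apply: lt_le_trans ab (bigmin_le _ _ _).
Qed.

End CompactMetric.

Lemma box_bigmax {k M : nat} {u : 'rV[int]_k} :
  (\max_(i < k) `|u ord0 i|%N <= M)%N -> box M u.
Proof.
by move=> uM i; have := leq_trans (@leq_bigmax _ (fun i => `|u ord0 i|%N) i) uM; lia.
Qed.

Section ExpansiveAction.
Context {R : realType} {X : metricType R} {k : nat} {T : 'rV[int]_k -> X -> X}.
Hypotheses (cX : compact [set: X]) (Tc : forall u, continuous (T u)).

Lemma uniform_expansive_box (r e : R) : 0 < e ->
  (forall x y, x != y -> exists u, r < mdist (T u x) (T u y)) ->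
  exists M : nat, forall a b,
    (forall v, box M v -> mdist (T v a) (T v b) <= r) -> mdist a b <= e.
Proof.
move=> e0 sepT; apply: contrapT => noM.
have /choice [s sP] : forall M : nat, exists ab : X * X,
    (forall v, box M v -> mdist (T v ab.1) (T v ab.2) <= r) /\ e < mdist ab.1 ab.2.
  move=> M; apply: contrapT => nab; apply: noM; exists M => a b abM.
  by rewrite leNgt; apply/negP => ab; apply: nab; exists (a, b).
have cXX : compact [set: X * X] by rewrite -setXTT; apply: compact_setX.
have [[p q] cl] := compact_seq_cluster s cXX.
have pq : p != q.
  apply/eqP => qp; subst q.
  have [n _ [/= pa pb]] := cl _ (nbhs_pair_mdist_lt p p _ (divr_gt0 e0 (ltr0Sn _ 1))) 0%N.
  rewrite metric_sym in pa.
  have := le_lt_trans (metric_triangle _ p _) (ltrD pa pb).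
  by rewrite -splitr ltNge (ltW (sP n).2).
have [u ru] := sepT _ _ pq.
pose gap := (mdist (T u p) (T u q) - r) / 2.
have gap0 : 0 < gap by rewrite divr_gt0 // subr_gt0.
have [dp dp0 Tp] := continuous_mdist_lt _ (Tc u p) gap0.
have [dq dq0 Tq] := continuous_mdist_lt _ (Tc u q) gap0.
have d0 : 0 < Num.min dp dq by rewrite lt_min dp0 dq0.
have [n uM []] := cl _ (nbhs_pair_mdist_lt p q _ d0) (\max_(i < k) `|u ord0 i|%N).
rewrite !lt_min => /andP[/Tp Tpa _] /andP[_ /Tq Tqb].
have Tab := (sP n).1 u (box_bigmax uM).
have t1 := metric_triangle (T u p) (T u (s n).1) (T u q).
have t2 := metric_triangle (T u (s n).1) (T u (s n).2) (T u q).
rewrite [mdist (T u (s n).2) _]metric_sym /gap in t2 Tpa Tqb; lra.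
Qed.

Lemma shift_equicontinuous (M : nat) (e : R) : 0 < e ->
  exists2 d, 0 < d & forall (i : 'I_k) (t : int), `|t| <= M%:Z ->
    forall a b, mdist a b < d ->
    mdist (T (t *: delta_mx 0 i) a) (T (t *: delta_mx 0 i) b) < e.
Proof.
move=> e0.
pose shift (ij : 'I_k * 'I_M.*2.+1) : 'rV[int]_k :=
  ((ij.2 : nat)%:Z - M%:Z) *: delta_mx 0 ij.1.
have [d d0 Td] := compact_fin_equicontinuous cX (fun ij => Tc (shift ij)) e e0.
exists d => // i t tM a b ab.
have jM : (`|(t + M%:Z)%R|%N < M.*2.+1)%N by lia.
have -> : t = (Ordinal jM : nat)%:Z - M%:Z by rewrite /=; lia.
exact: (Td (i, Ordinal jM)).
Qed.

End ExpansiveAction.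

Lemma int_shift_onto_bound {N M : nat} {a b : int} :
  `|b| <= N%:Z -> `|a| <= M%:Z -> N%:Z < `|a + b| ->
  exists2 t : int, `|t| <= M%:Z & `|b + t| = N%:Z.
Proof.
by move=> bN aM abN; exists ((if 0 < a + b then N%:Z else - N%:Z) - b); case: ifP; lia.
Qed.

Lemma box_interior_or_near_boundary {k N : nat} {u : 'rV[int]_k} (M : nat) :
  box N u ->
  (forall v, box M v -> box N (v + u)) \/
  exists (i : 'I_k) (t : int), `|t| <= M%:Z /\ boxbd N (u + t *: delta_mx 0 i).
Proof.
move=> uN; have [inner|] := pselect (forall v, box M v -> box N (v + u)).
  by left.
move=> /existsNP[v /not_implyP[vM /existsNP[i]]]; rewrite mxE => /negP.
rewrite -ltNge => /(int_shift_onto_bound (uN i) (vM i))[t tM uti]; right.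
have entry j : (u + t *: delta_mx 0 i) ord0 j = u ord0 j + (if j == i then t else 0).
  by rewrite !mxE eqxx /=; case: eqP => _; rewrite ?mulr1 ?mulr0.
exists i, t; split => //; split; last by exists i; rewrite entry eqxx.
by move=> j; rewrite entry; case: eqP => [->|_]; rewrite ?uti ?addr0.
Qed.

Section SupDistance.
Context {R : realType} {X : metricType R} {k : nat} {T : 'rV[int]_k -> X -> X}.
Context {x y : X}.

Lemma dT_gt_witness {Omega : set 'rV[int]_k} {r : R} : Omega !=set0 ->
  r < dT T Omega x y -> exists2 u, Omega u & r < mdist (T u x) (T u y).
Proof.
move=> [u0 Ou0] /sup_gt[|_ [u Ou <-] ru]; last by exists u.
by exists (mdist (T u0 x) (T u0 y)), u0.
Qed.

Lemma dT_gt0_has_ubound {Omega : set 'rV[int]_k} : 0 < dT T Omega x y ->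
  has_ubound [set mdist (T u x) (T u y) | u in Omega].
Proof.
move=> dT0; apply: contrapT => noub.
by move: dT0; rewrite /dT sup_out ?ltxx // => -[].
Qed.

Lemma le_dT {Omega Omega' : set 'rV[int]_k} {u : 'rV[int]_k} :
  Omega `<=` Omega' -> has_ubound [set mdist (T v x) (T v y) | v in Omega'] ->
  Omega u ->
  mdist (T u x) (T u y) <= dT T Omega x y.
Proof.
move=> OO' [b ub] Ou; apply: ub_le_sup; last by exists u.
by exists b => _ [v Ov <-]; apply: ub; exists v => //; apply: OO'.
Qed.

End SupDistance.

Theorem lemma3p1 (R : realType) (X : metricType R) (k : nat)
  (T : 'rV[int]_k -> X -> X) (c : R) :
  compact [set: X] ->
  (0 < k)%N ->
  is_Zk_action T ->
  (forall u, continuous (T u)) ->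
  0 < c ->
  (forall x y : X, x != y -> dT T [set: 'rV[int]_k] x y > 2 * c) ->
  exists delta : R, 0 < delta /\
    forall (N : nat) (x y : X), (1 <= N)%N ->
      c <= dT T (@box k N) x y <= 2 * c ->
      dT T (@boxbd k N) x y > delta.
Proof.
move=> cX _ [_ TD] Tc c0 sepT.
have c20 : 0 < c / 2 by lra.
have expT (x y : X) : x != y -> exists u, 2 * c < mdist (T u x) (T u y).
  by move=> /sepT /dT_gt_witness[|u _]; [exists 0 | exists u].
have [M Mc] := uniform_expansive_box cX Tc (2 * c) _ c20 expT.
have [d d0 shiftd] := shift_equicontinuous cX Tc M _ c20.
exists (d / 2); split => [|N x y _ /andP[cdT dT2c]]; first by lra.
rewrite ltNge; apply/negP => bddT.
have [u uN ucx] : exists2 u, box N u & c / 2 < mdist (T u x) (T u y).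
  by apply: dT_gt_witness; [exists 0 => i; rewrite mxE | lra].
have ub := dT_gt0_has_ubound (lt_le_trans c0 cdT).
have [inner|[i [t [tM bd]]]] := box_interior_or_near_boundary M uN.
  suff : mdist (T u x) (T u y) <= c / 2 by lra.
  apply: Mc => v vM; rewrite -!TD.
  exact: le_trans (le_dT (@subset_refl _ _) ub (inner v vM)) dT2c.
have near : mdist (T (u + t *: delta_mx 0 i) x) (T (u + t *: delta_mx 0 i) y) < d.
  have bd_sub : @boxbd k N `<=` box N by move=> v [].
  have := le_dT bd_sub ub bd; lra.
rewrite -normrN in tM; have := shiftd i (- t) tM _ _ near.
rewrite -!TD addrC -addrA -scalerDl addrN scale0r addr0; lra.
Qed.
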